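(* Assume $\inf_{x\in X}\mu(B_x(1/2))>0$. Let $T\in\mathscr{B}(X)$ be a controlled operator and $\xi$ a filter on $X$ finer than the Fréchet filter. Then $\inf_{F\in\mathrm{co}(\xi)}\|\mathbf{1}_FT\|=0$ (infimum over measurable $F\in\mathrm{co}(\xi)$) if and only if $\lim_{x\to\xi}\|\mathbf{1}_{B_x(r)}T\|=0$ for all $r>0$.
   Context: Let $(X,d)$ be a non-compact proper metric space (closed balls $B_x(r)=\{y:d(x,y)\le r\}$ compact) and $\mu$ a Radon measure with support $X$, with $\mu(B_x(r))>0$ and $\sup_x\mu(B_x(r))<\infty$ for all $r>0$. $\mathscr{B}(X)$ = bounded operators on $L^2(X,\mu)$; $\mathbf{1}_A$ is multiplication by the characteristic function of measurable $A$. $T\in\mathscr{B}(X)$ is controlled if there is $r>0$ such that $\mathbf{1}_FT\mathbf{1}_G=0$ for all closed $F,G\subset X$ with $d(F,G)>r$. Fréchet filter = sets with relatively compact complement. $\lim_{x\to\xi}f(x)=0$ means $\{x:|f(x)|<\varepsilon\}\in\xi$ for all $\varepsilon>0$. $F^{(r)}=\{x:\inf_{y\notin F}d(x,y)>r\}$ and $\mathrm{co}(\xi)=\{F\subset X:F^{(r)}\in\xi\ \forall r>0\}$. *)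

From mathcomp Require Import all_boot all_order all_algebra.
From mathcomp Require Import all_classical all_reals all_analysis.
From mathcomp Require Import complex.

Set Implicit Arguments.
Unset Strict Implicit.
Unset Printing Implicit Defensive.

Import Order.TTheory GRing.Theory Num.Theory.
Local Open Scope classical_set_scope.
Local Open Scope ring_scope.

Notation Cx R := (complex.complex (R : rcfType)).

Section Metric.
Context {R : realType} {X : Type} (dist : X -> X -> R).

Definition is_metric : Prop :=
  [/\ forall x y, 0 <= dist x y,
      forall x y, dist x y = 0 <-> x = y,
      forall x y, dist x y = dist y x
    & forall x y z, dist x z <= dist x y + dist y z].

Definition cball (x : X) (r : R) : set X := [set y | dist x y <= r].
Definition oball (x : X) (r : R) : set X := [set y | dist x y < r].

Definition dopen (A : set X) : Prop :=
  forall x, A x -> exists2 r : R, 0 < r & oball x r `<=` A.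

Definition dclosed (A : set X) : Prop := dopen (~` A).

Definition dclosure (A : set X) : set X :=
  [set x | forall r : R, 0 < r -> exists2 y, A y & dist x y < r].

Definition dcompact (K : set X) : Prop :=
  forall (I : Type) (U : I -> set X), (forall i, dopen (U i)) ->
    K `<=` \bigcup_(i in [set: I]) U i ->
    exists2 J : set I, finite_set J & K `<=` \bigcup_(i in J) U i.

Definition proper_metric : Prop := forall x r, dcompact (cball x r).

(* d(F,G) = inf { d(x,y) : x in F, y in G } (= +oo if F or G is empty) *)
Definition setdist (A B : set X) : \bar R :=
  ereal_inf [set (dist p.1 p.2)%:E | p in A `*` B].

Definition frechet : set_system X := [set A | dcompact (dclosure (~` A))].

Definition inner_r (F : set X) (r : R) : set X :=
  [set x | (r%:E < ereal_inf [set (dist x y)%:E | y in ~` F])%E].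

Definition co (xi : set_system X) : set_system X :=
  [set F | forall r : R, 0 < r -> xi (inner_r F r)].

End Metric.

Section Measure.
Context {R : realType} {d : measure_display} {X : measurableType d}
  (dist : X -> X -> R) (mu : {measure set X -> \bar R}).

Definition borel_sigma : Prop := @measurable _ X = <<s dopen dist >>.

Definition locally_finite : Prop :=
  forall x, exists2 U, dopen dist U /\ U x & (mu U < +oo)%E.

Definition outer_regular : Prop :=
  forall A, measurable A ->
    mu A = ereal_inf [set mu U | U in [set U | dopen dist U /\ A `<=` U]].

Definition inner_regular_open : Prop :=
  forall U, dopen dist U ->
    mu U = ereal_sup [set mu K | K in [set K | dcompact dist K /\ K `<=` U]].

Definition radon : Prop :=
  [/\ locally_finite, outer_regular & inner_regular_open].

(* supp mu = X : every nonempty open set has positive measure *)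
Definition full_support : Prop :=
  forall U, dopen dist U -> U !=set0 -> (0 < mu U)%E.

Definition cmod (z : Cx R) : R :=
  Num.sqrt (complex.Re z ^+ 2 + complex.Im z ^+ 2).

Definition cmeasurable (f : X -> Cx R) : Prop :=
  measurable_fun setT (fun x => complex.Re (f x)) /\
  measurable_fun setT (fun x => complex.Im (f x)).

Definition L2norm (f : X -> Cx R) : \bar R :=
  Lnorm mu 2%:E (fun x => (cmod (f x))%:E).

(* f is a representative of an element of L^2(X, mu) *)
Definition L2 (f : X -> Cx R) : Prop := cmeasurable f /\ (L2norm f < +oo)%E.

Definition ae_eq (f g : X -> Cx R) : Prop := {ae mu, forall x, f x = g x}.

(* A bounded operator on L^2(X,mu), given on representatives: it maps L^2
   to L^2, is compatible with a.e. equality, is C-linear (a.e.) and is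
   bounded. *)
Definition bounded_operator (T : (X -> Cx R) -> (X -> Cx R)) : Prop :=
  [/\ forall f, L2 f -> L2 (T f),
      forall f g, L2 f -> L2 g -> ae_eq f g -> ae_eq (T f) (T g),
      forall (a : Cx R) f g, L2 f -> L2 g ->
        ae_eq (T (fun x => a * f x + g x)) (fun x => a * T f x + T g x)
    & exists M : R, forall f, L2 f -> (L2norm (T f) <= M%:E * L2norm f)%E].

Definition opnorm (S : (X -> Cx R) -> (X -> Cx R)) : \bar R :=
  ereal_sup [set L2norm (S f) | f in [set f | L2 f /\ (L2norm f <= 1)%E]].

Definition indl (F : set X) (T : (X -> Cx R) -> (X -> Cx R)) :
  (X -> Cx R) -> (X -> Cx R) := fun f x => \1_F x * T f x.

Definition indr (T : (X -> Cx R) -> (X -> Cx R)) (G : set X) :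
  (X -> Cx R) -> (X -> Cx R) := fun f => T (fun x => \1_G x * f x).

Definition controlled (T : (X -> Cx R) -> (X -> Cx R)) : Prop :=
  exists2 r : R, 0 < r &
    forall F G, dclosed dist F -> dclosed dist G ->
      (r%:E < setdist dist F G)%E ->
      forall f, L2 f -> ae_eq (indl F (indr T G) f) (fun _ => 0).

End Measure.

From Pilot Require Import Defs.
From mathcomp Require Import all_boot all_order all_algebra.
From mathcomp Require Import all_classical all_reals all_analysis.
From mathcomp Require Import complex.
From mathcomp Require Import measurable_realfun lra.
Import Order.TTheory GRing.Theory Num.Theory.
Local Open Scope classical_set_scope.
Local Open Scope ring_scope.

(* (=>) If F is in co(xi), then for every r > 0 the ball B_x(r) lies inside F
   for xi-almost every x, so ||1_{B_x(r)} T|| <= ||1_F T|| eventually.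
   (<=) Given e > 0, let F be the union of the unit balls around the points z
   with ||1_{B_z(5)} T|| < e; the hypothesis puts F in co(xi).  Fix a
   1-separated 2-net (c_n).  If T has propagation r0, then 1_{B(c_n,2)} T f
   only depends on f on B(c_n, r0 + 3); the uniform lower bound on the measure
   of balls of radius 1/2 and the uniform upper bound on the measure of balls
   of radius r0 + 7/2 bound the multiplicity K of these larger balls.  Summing
   over the balls B(c_n,2) meeting F gives ||1_F T f||^2 <= K e^2 ||f||^2. *)

Section Metric.
Context {R : realType} {X : Type} {dist : X -> X -> R} (Hm : is_metric dist).

Lemma dist_xx x : dist x x = 0. Proof. by case: Hm => _ h _ _; apply/h. Qed.
Lemma distC x y : dist x y = dist y x. Proof. by case: Hm. Qed.
Lemma dist_triangle x y z : dist x z <= dist x y + dist y z. Proof. by case: Hm. Qed.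

Lemma dopen_oball x r : dopen dist (oball dist x r).
Proof.
move=> y hy; exists (r - dist x y); first by rewrite subr_gt0.
move=> z hz; apply: le_lt_trans (dist_triangle x y z) _.
by rewrite -ltrBrDl.
Qed.

Lemma dclosed_cball x r : dclosed dist (cball dist x r).
Proof.
move=> y /negP; rewrite -ltNge => hy.
exists (dist x y - r); first by rewrite subr_gt0.
move=> z hz /=; apply/negP; rewrite -ltNge.
have := dist_triangle x z y; rewrite [dist z y]distC /oball /= in hz *.
lra.
Qed.

Lemma dclosedC A : dopen dist A -> dclosed dist (~` A).
Proof. by rewrite /dclosed setCK. Qed.

Lemma cball_sub x y r s : dist x y + r <= s -> cball dist y r `<=` cball dist x s.
Proof.
move=> h z hz; apply: le_trans (dist_triangle x y z) _.
by apply: le_trans h; rewrite lerD2l.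
Qed.

Lemma setdist_cball_oballC x s t : 0 <= s ->
  (t%:E < setdist dist (cball dist x s) (~` oball dist x (s + t + 1)))%E.
Proof.
move=> s0; apply: (@lt_le_trans _ _ (t + 1)%:E); first by rewrite lte_fin ltrDl.
apply: le_ereal_inf_tmp => _ [[p q] [/= hp hq] <-].
move: hq => /negP; rewrite -leNgt => hq.
by have := dist_triangle x p q; rewrite lee_fin /cball /= in hp *; lra.
Qed.

Lemma co_cball_sub {xi : set_system X} {xi_filter : Filter xi} {F} r :
  co dist xi F -> 0 < r -> xi [set x | cball dist x r `<=` F].
Proof.
move=> coF r0; apply: filterS (coF r r0) => x hx w hw.
apply: contrapT => nFw; have : (r%:E < (dist x w)%:E)%E.
  by apply: lt_le_trans hx _; apply: ereal_inf_lbound; exists w.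
by rewrite lte_fin ltNge hw.
Qed.

End Metric.

Section GreedyNet.
Context {R : realType} {X : Type} (dist : X -> X -> R) (Hm : is_metric dist).
Variable c : nat -> X.

Fixpoint greedy_kept (k : nat) : seq nat :=
  if k is k'.+1 then
    if all (fun j => 1 < dist (c j) (c k')) (greedy_kept k')
    then k' :: greedy_kept k' else greedy_kept k'
  else [::].

Definition greedy_sel k := k \in greedy_kept k.+1.

Lemma greedy_kept_lt k j : j \in greedy_kept k -> (j < k)%N.
Proof.
elim: k => [//|k IH] /=; case: ifP => _; rewrite ?inE.
  by case/orP => [/eqP ->//|/IH /ltnW]; rewrite ltnS.
by move/IH => /ltnW; rewrite ltnS.
Qed.

Lemma mem_greedy_kept k j : (j \in greedy_kept k) = (j < k)%N && greedy_sel j.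
Proof.
elim: k => [//|k IH].
case: (ltngtP j k) => hjk.
- have -> : (j < k.+1)%N by apply: ltnW; rewrite ltnS.
  by rewrite /=; case: ifP => _; rewrite ?inE ?(ltn_eqF hjk) /= IH hjk.
- rewrite ltnNge hjk andFb; apply/negP => /greedy_kept_lt.
  by rewrite ltnS leqNgt hjk.
- by rewrite hjk ltnSn.
Qed.

Lemma greedy_selE k : greedy_sel k = all (fun j => 1 < dist (c j) (c k)) (greedy_kept k).
Proof.
rewrite /greedy_sel /=; case: ifP => h; first by rewrite inE eqxx.
by apply/negP => /greedy_kept_lt; rewrite ltnn.
Qed.

Lemma greedy_sel_sep i j : greedy_sel i -> greedy_sel j -> i != j -> 1 < dist (c i) (c j).
Proof.
wlog hij : i j / (i < j)%N.
  move=> W si sj nij; case: (ltngtP i j) => h.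
  - exact: W.
  - by rewrite distC //; apply: W => //; rewrite eq_sym.
  - by rewrite h eqxx in nij.
move=> si; rewrite greedy_selE => /allP sj _; apply: sj.
by rewrite mem_greedy_kept hij si.
Qed.

Lemma greedy_sel_near k : exists2 j, greedy_sel j & dist (c j) (c k) <= 1.
Proof.
case: (boolP (greedy_sel k)) => h; first by exists k => //; rewrite dist_xx.
move: h; rewrite greedy_selE => /allPn [j hj hd].
exists j; first by move: hj; rewrite mem_greedy_kept => /andP[].
by rewrite leNgt.
Qed.

End GreedyNet.

(* Each ball [cball x0 n] is covered by finitely many unit balls; enumerating
   all their centres gives a sequence whose unit balls cover [X], and the
   greedy extraction turns it into a 1-separated 2-net. *)
Lemma exists_separated_net {R : realType} {X : choiceType} {dist : X -> X -> R}
  (Hm : is_metric dist) (Hproper : proper_metric dist) (x0 : X) :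
  exists c : nat -> X, exists sel : nat -> bool,
   (forall i j, sel i -> sel j -> i != j -> 1 < dist (c i) (c j)) /\
   (forall y, exists2 j, sel j & dist (c j) y <= 2).
Proof.
have hs n : exists s : seq X, forall y, dist x0 y <= n%:R ->
    exists2 z, z \in s & dist z y < 1.
  have [|J /finite_fsetP [B ->] hcov] := Hproper x0 n%:R X (fun y => oball dist y 1)
    (fun y => dopen_oball Hm y 1).
    by move=> y _; exists y => //; rewrite /oball /= dist_xx.
  by exists (finmap.enum_fset B) => y /hcov [z Bz hz]; exists z.
have [s hsP] := choice hs.
pose c m := if @unpickle (nat * nat)%type m is Some p then nth x0 (s p.1) p.2 else x0.
have hc y : exists m, dist (c m) y < 1.
  set n := (Num.truncn (dist x0 y)).+1.
  have [z zs hz] := hsP n y (ltW (truncnS_gt _)).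
  by exists (pickle (n, index z (s n))); rewrite /c pickleK /= nth_index.
exists c, (greedy_sel dist c); split; first exact: greedy_sel_sep.
move=> y; have [m hm] := hc y; have [j sj hj] := greedy_sel_near _ Hm c m.
exists j => //; apply: le_trans (dist_triangle Hm _ (c m) _) _; lra.
Qed.

Lemma sqrte_le_EFin {R : realType} (x : \bar R) (e : R) : 0 <= e -> (0 <= x)%E ->
  (sqrte x <= e%:E)%E = (x <= (e ^+ 2)%:E)%E.
Proof.
move=> e0 x0; rewrite -[RHS]lee_sqrt ?lee_fin ?sqr_ge0 //=.
by rewrite sqrtr_sqr ger0_norm.
Qed.

Section BorelBalls.
Context {R : realType} {d : measure_display} {X : measurableType d}
  {dist : X -> X -> R} (Hm : is_metric dist) (Hborel : borel_sigma dist).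

Lemma measurable_dopen A : dopen dist A -> measurable A.
Proof. by move=> hA; rewrite Hborel; apply: sub_sigma_algebra. Qed.

Lemma measurable_cball x r : measurable (cball dist x r).
Proof. by rewrite -[cball _ _ _]setCK; apply/measurableC/measurable_dopen/dclosed_cball. Qed.

Lemma measurable_oball x r : measurable (oball dist x r).
Proof. exact/measurable_dopen/dopen_oball. Qed.

End BorelBalls.

Section L2.
Local Open Scope complex_scope.
Context {R : realType} {d : measure_display} {X : measurableType d}
  (mu : {measure set X -> \bar R}).
Implicit Types (g h : X -> Cx R) (A : set X).

Definition normc2 (z : Cx R) : R := complex.Re z ^+ 2 + complex.Im z ^+ 2.

Definition L2norm2 g : \bar R := (\int[mu]_x (normc2 (g x))%:E)%E.

Lemma normc2_ge0 z : 0 <= normc2 z.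
Proof. by rewrite addr_ge0 ?sqr_ge0. Qed.

Lemma indicMc A x (z : Cx R) : \1_A x * z = (\1_A x)%:C * z.
Proof. by rewrite /indic; case: (x \in A). Qed.

Lemma Re_scale (a : R) (z : Cx R) : complex.Re (a%:C * z) = a * complex.Re z.
Proof. by case: z => u v /=; rewrite mul0r subr0. Qed.

Lemma Im_scale (a : R) (z : Cx R) : complex.Im (a%:C * z) = a * complex.Im z.
Proof. by case: z => u v /=; rewrite mul0r addr0. Qed.

Lemma normc2_scale (a : R) (z : Cx R) : normc2 (a%:C * z) = a ^+ 2 * normc2 z.
Proof. by rewrite /normc2 Re_scale Im_scale !exprMn mulrDr. Qed.

Lemma normc2_indic A x (z : Cx R) : normc2 (\1_A x * z) = \1_A x * normc2 z.
Proof.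
by rewrite indicMc normc2_scale /indic; case: (x \in A); rewrite ?expr1n ?expr0n.
Qed.

Lemma L2norm2_ge0 g : (0 <= L2norm2 g)%E.
Proof. by apply: integral_ge0 => x _; rewrite lee_fin normc2_ge0. Qed.

Lemma L2normE g : L2norm mu g = sqrte (L2norm2 g).
Proof.
rewrite /L2norm unlock /Lnorm -poweR12_sqrt ?L2norm2_ge0 //; congr (_ `^ _)%E.
apply: eq_integral => x _ /=.
rewrite powR_mulrn ?normr_ge0 // ger0_norm ?sqrtr_ge0 //.
by rewrite /cmod sqr_sqrtr // normc2_ge0.
Qed.

Lemma cmeasurable_scale (a : R) g : cmeasurable g -> cmeasurable (fun x => a%:C * g x).
Proof.
case=> hre him; split.
  under eq_fun do rewrite Re_scale.
  by apply: measurable_funM => //; apply: measurable_cst.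
under eq_fun do rewrite Im_scale.
by apply: measurable_funM => //; apply: measurable_cst.
Qed.

Lemma cmeasurable_indic A g : measurable A -> cmeasurable g ->
  cmeasurable (fun x => \1_A x * g x).
Proof.
move=> mA [hre him]; under eq_fun do rewrite indicMc.
split.
  under eq_fun do rewrite Re_scale.
  by apply: measurable_funM => //; apply: measurable_indic.
under eq_fun do rewrite Im_scale.
by apply: measurable_funM => //; apply: measurable_indic.
Qed.

Lemma measurable_normc2 g : cmeasurable g ->
  measurable_fun setT (fun x => (normc2 (g x))%:E).
Proof.
by case=> hre him; apply/measurable_EFinP; apply: measurable_funD; apply: measurable_funX.
Qed.

Lemma L2P g : L2 mu g <-> cmeasurable g /\ (L2norm2 g < +oo)%E.
Proof.
rewrite /L2 L2normE -!ge0_fin_numE ?sqrte_ge0 ?L2norm2_ge0 //.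
by rewrite sqrte_fin_num // L2norm2_ge0.
Qed.

Lemma L2norm2_aeeq {g h} : cmeasurable g -> cmeasurable h -> Defs.ae_eq mu g h ->
  L2norm2 g = L2norm2 h.
Proof.
move=> cg ch hae; apply: ae_eq_integral => //; try exact: measurable_normc2.
by apply: filterS hae => x /= -> _.
Qed.

Lemma L2norm2_indic_le {A g} : measurable A -> cmeasurable g ->
  (L2norm2 (fun x => (\1_A x * g x)%R) <= L2norm2 g)%E.
Proof.
move=> mA cg; apply: ge0_le_integral => //.
- by move=> x _; rewrite lee_fin normc2_ge0.
- exact/measurable_normc2/cmeasurable_indic.
- exact: measurable_normc2.
move=> x _; rewrite lee_fin normc2_indic /indic.
by case: (x \in A); rewrite ?mul1r ?mul0r ?normc2_ge0.
Qed.

Lemma L2norm2_scale (a : R) g : cmeasurable g ->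
  L2norm2 (fun x => a%:C * g x) = ((a ^+ 2)%:E * L2norm2 g)%E.
Proof.
move=> cg; rewrite /L2norm2 -ge0_integralZl_EFin ?sqr_ge0 //.
- by apply: eq_integral => x _; rewrite normc2_scale EFinM.
- by move=> x _; rewrite lee_fin normc2_ge0.
- exact: measurable_normc2.
Qed.

Lemma L2norm2_0 : L2norm2 (fun _ => 0) = 0%E.
Proof.
rewrite /L2norm2; under eq_integral do rewrite /normc2 /= expr0n /= addr0.
exact: integral0.
Qed.

Lemma L2_0 : L2 mu (fun _ => 0 : Cx R).
Proof. by apply/L2P; split; [split; apply: measurable_cst | rewrite L2norm2_0]. Qed.

Lemma L2_indic {A g} : measurable A -> L2 mu g -> L2 mu (fun x => \1_A x * g x).
Proof.
move=> mA /L2P [cg qg]; apply/L2P; split; first exact: cmeasurable_indic.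
exact: le_lt_trans (L2norm2_indic_le mA cg) qg.
Qed.

Lemma L2_scale (a : R) {g} : L2 mu g -> L2 mu (fun x => a%:C * g x).
Proof.
move=> /L2P [cg qg]; apply/L2P; split; first exact: cmeasurable_scale.
rewrite L2norm2_scale //; have qfin : L2norm2 g \is a fin_num.
  by rewrite ge0_fin_numE // L2norm2_ge0.
by rewrite -(fineK qfin) -EFinM ltry.
Qed.

End L2.

Section BoundedOperator.
Local Open Scope complex_scope.
Context {R : realType} {d : measure_display} {X : measurableType d}
  {mu : {measure set X -> \bar R}}.
Implicit Types (g h : X -> Cx R) (A B : set X).
Local Notation L2norm2 := (L2norm2 mu).

Lemma opnorm_ubound S {f} : L2 mu f -> (L2norm mu f <= 1)%E ->
  (L2norm mu (S f) <= opnorm mu S)%E.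
Proof. by move=> Lf nf; apply: ereal_sup_ubound; exists f. Qed.

Lemma opnorm_ge0 S : (0 <= opnorm mu S)%E.
Proof.
apply: le_trans (opnorm_ubound S (L2_0 mu) _); first by rewrite L2normE sqrte_ge0.
by rewrite L2normE L2norm2_0 sqrte0.
Qed.

Context {T : (X -> Cx R) -> (X -> Cx R)} (HT : bounded_operator mu T).

Lemma boundedop_L2 {g} : L2 mu g -> L2 mu (T g).
Proof. by case: HT => h _ _ _; exact: h. Qed.

Lemma boundedop0 : Defs.ae_eq mu (T (fun _ => 0)) (fun _ => 0).
Proof.
case: HT => _ _ hlin _.
have := hlin 1 (fun _ => 0) (fun _ => 0) (L2_0 mu) (L2_0 mu).
have -> : (fun _ : X => 1 * 0 + 0) = (fun _ => 0 : Cx R).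
  by apply: funext => x; rewrite mul1r addr0.
apply: filterS => x; rewrite mul1r => h.
by apply: (addrI (T (fun _ => 0) x)); rewrite addr0 -h.
Qed.

Lemma boundedopZ (a : Cx R) {g} : L2 mu g ->
  Defs.ae_eq mu (T (fun x => a * g x)) (fun x => a * T g x).
Proof.
move=> Lg; case: HT => _ _ hlin _.
have := hlin a g (fun _ => 0) Lg (L2_0 mu).
have -> : (fun x => a * g x + 0) = (fun x => a * g x) by apply: funext => x; rewrite addr0.
by move=> h1; apply: filterS2 h1 boundedop0 => x -> ->; rewrite addr0.
Qed.

Lemma boundedopD {g h} : L2 mu g -> L2 mu h ->
  Defs.ae_eq mu (T (fun x => g x + h x)) (fun x => T g x + T h x).
Proof.
move=> Lg Lh; case: HT => _ _ hlin _.
have := hlin 1 g h Lg Lh.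
have -> : (fun x => 1 * g x + h x) = (fun x => g x + h x) by apply: funext => x; rewrite mul1r.
by apply: filterS => x ->; rewrite mul1r.
Qed.

Lemma cmeasurable_indl {A g} : measurable A -> L2 mu g -> cmeasurable (indl A T g).
Proof. by move=> mA /boundedop_L2 /L2P [cTg _]; apply: cmeasurable_indic. Qed.

Lemma le_opnorm_indl A B : measurable A -> measurable B -> A `<=` B ->
  (opnorm mu (indl A T) <= opnorm mu (indl B T))%E.
Proof.
move=> mA mB AB; apply: ge_ereal_sup => _ [f [Lf nf] <-].
apply: le_trans (opnorm_ubound _ Lf nf).
rewrite !L2normE lee_sqrt ?L2norm2_ge0 //.
have -> : indl A T f = (fun x => \1_A x * indl B T f x).
  apply: funext => x; rewrite /indl mulrA; congr (_ * _).
  rewrite /indic; case: (boolP (x \in A)) => xA /=; last by rewrite mul0r.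
  by rewrite mem_set ?mulr1 //; apply/AB/set_mem.
exact (L2norm2_indic_le mu mA (cmeasurable_indl mB Lf)).
Qed.

(* Test the operator norm on [g / sqrt (L2norm2 g + eta)], [eta > 0], since
   [L2norm g] itself may vanish. *)
Lemma L2norm2_indl_le B e g : measurable B -> 0 <= e ->
  (opnorm mu (indl B T) <= e%:E)%E -> L2 mu g ->
  (L2norm2 (indl B T g) <= (e ^+ 2)%:E * L2norm2 g)%E.
Proof.
move=> mB e0 hop Lg; have [cg qg] := (L2P mu g).1 Lg.
have qfin : L2norm2 g \is a fin_num by rewrite ge0_fin_numE // L2norm2_ge0.
set q := fine (L2norm2 g); have qE : L2norm2 g = q%:E by rewrite fineK.
have q0 : 0 <= q by rewrite -lee_fin -qE L2norm2_ge0.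
rewrite qE; apply/lee_addgt0Pr => eta eta0.
set eta1 := eta / (e ^+ 2 + 1).
have e21 : 0 < e ^+ 2 + 1 by rewrite ltr_wpDl ?sqr_ge0.
have eta10 : 0 < eta1 by rewrite divr_gt0.
set s := q + eta1; have s0 : 0 < s by rewrite ltr_wpDl.
set a := Num.sqrt (s^-1).
have a2 : a ^+ 2 = s^-1 by rewrite sqr_sqrtr // invr_ge0 ltW.
have a0 : 0 < a ^+ 2 by rewrite a2 invr_gt0.
have Lag : L2 mu (fun x => a%:C * g x) := L2_scale mu a Lg.
have nag : (L2norm mu (fun x => (a%:C * g x)%R) <= 1)%E.
  rewrite L2normE (sqrte_le_EFin _ _ ler01) ?L2norm2_ge0 // expr1n.
  rewrite L2norm2_scale // qE -EFinM lee_fin a2 mulrC ler_pdivrMr //.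
  by rewrite mul1r /s lerDl ltW.
have := le_trans (opnorm_ubound _ Lag nag) hop.
rewrite L2normE sqrte_le_EFin ?L2norm2_ge0 //.
have hae : Defs.ae_eq mu (indl B T (fun x => a%:C * g x)) (fun x => a%:C * indl B T g x).
  by apply: filterS (boundedopZ a%:C Lg) => x; rewrite /indl => ->; rewrite mulrCA.
rewrite (L2norm2_aeeq mu (cmeasurable_indl mB Lag) _ hae); last first.
  exact/cmeasurable_scale/cmeasurable_indl.
rewrite L2norm2_scale; last exact: cmeasurable_indl.
rewrite -lee_pdivlMl // -EFinM => h; apply: le_trans h _.
rewrite a2 invrK -EFinM -EFinD lee_fin /s mulrDl [e ^+ 2 * q]mulrC lerD2l.
rewrite mulrC /eta1 mulrA ler_pdivrMr //.
by rewrite mulrC ler_pM2l // lerDl.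
Qed.

Lemma opnorm_le_of_L2norm2_le S (C : R) : 0 <= C ->
  (forall f, L2 mu f -> L2norm2 (S f) <= (C ^+ 2)%:E * L2norm2 f)%E ->
  (opnorm mu S <= C%:E)%E.
Proof.
move=> C0 hS; apply: ge_ereal_sup => _ [f [Lf nf] <-].
rewrite L2normE (sqrte_le_EFin _ _ C0) ?L2norm2_ge0 //.
rewrite L2normE (sqrte_le_EFin _ _ ler01) ?L2norm2_ge0 // expr1n in nf.
apply: le_trans (hS f Lf) _.
by rewrite -[X in (_ <= X)%E]mule1 lee_wpmul2l // lee_fin sqr_ge0.
Qed.

End BoundedOperator.

Section Controlled.
Context {R : realType} {d : measure_display} {X : measurableType d}
  {dist : X -> X -> R} {mu : {measure set X -> \bar R}}
  (Hm : is_metric dist) (Hborel : borel_sigma dist).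
Context {T : (X -> Cx R) -> (X -> Cx R)} (HT : bounded_operator mu T).
Variable r0 : R.
Hypothesis hctrl : forall {F G}, dclosed dist F -> dclosed dist G ->
  (r0%:E < setdist dist F G)%E ->
  forall f, L2 mu f -> Defs.ae_eq mu (indl F (indr T G) f) (fun _ => 0).

Lemma indl_cball_localize z s f : 0 <= s -> L2 mu f ->
  Defs.ae_eq mu (indl (cball dist z s) T f)
    (indl (cball dist z s) T (fun x => \1_(oball dist z (s + r0 + 1)) x * f x)).
Proof.
move=> s0 Lf; set O := oball dist z (s + r0 + 1).
have mO : measurable O := measurable_oball Hm Hborel z _.
have fE : f = (fun x => \1_O x * f x + \1_(~` O) x * f x).
  apply: funext => x; rewrite -mulrDl /indic in_setC.
  by case: (x \in O); rewrite /= ?addr0 ?add0r mul1r.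
have hD := boundedopD HT (L2_indic mu mO Lf) (L2_indic mu (measurableC mO) Lf).
have hfar := hctrl (dclosed_cball Hm z s) (dclosedC _ (dopen_oball Hm z _))
  (setdist_cball_oballC Hm z s r0 s0) f Lf.
rewrite -fE in hD; apply: filterS2 hD hfar => x; rewrite /indl /indr => -> h.
by rewrite mulrDr h addr0.
Qed.

End Controlled.

(* Disjoint balls of radius 1/2 around the separated centres near [y] all lie
   in one ball around [y], whose measure bounds their number. *)
Lemma separated_count_le {R : realType} {d : measure_display} {X : measurableType d}
  {dist : X -> X -> R} {mu : {measure set X -> \bar R}}
  (Hm : is_metric dist) (Hborel : borel_sigma dist)
  (c : nat -> X) (sel : nat -> bool)
  (hsep : forall i j, sel i -> sel j -> i != j -> 1 < dist (c i) (c j))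
  (c0 rho M : R) (c0pos : 0 < c0)
  (hc0 : forall x, (c0%:E <= mu (cball dist x (2^-1)))%E)
  (hM : forall x, (mu (cball dist x (rho + 2^-1)) <= M%:E)%E) y N :
  \sum_(n < N) ((sel n && (dist (c n) y < rho))%:R : R) <= M / c0.
Proof.
pose b n := sel n && (dist (c n) y < rho).
pose A n := if b n then cball dist (c n) (2^-1) else set0.
have mA n : measurable (A n).
  by rewrite /A; case: (b n) => //; apply: measurable_cball.
have tA : trivIset setT A.
  move=> i j _ _ [z []]; rewrite /A; case bi : (b i) => //; case bj : (b j) => //.
  move: bi bj => /andP[si _] /andP[sj _] hi hj; apply/eqP/negPn/negP => nij.
  have := hsep _ _ si sj nij; have := dist_triangle Hm (c i) z (c j).
  by rewrite (distC Hm z) /cball /= in hi hj *; lra.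
have hU : (mu (\big[setU/set0]_(i < N) A i) <= M%:E)%E.
  apply: le_trans (hM y); apply: le_measure; rewrite ?inE.
  - by apply: bigsetU_measurable => i _.
  - exact: measurable_cball.
  move=> z /(@bigsetU_bigcup _ A N) [k _]; rewrite /A; case bk: (b k) => // hk.
  move: bk => /andP[_ hk']; rewrite /cball /= in hk *.
  by have := dist_triangle Hm y (c k) z; rewrite (distC Hm y (c k)); lra.
rewrite measure_bigsetU // in hU.
rewrite ler_pdivlMr // -lee_fin; apply: le_trans hU.
rewrite mulr_suml -sumEFin; apply: lee_sum => i _.
by rewrite /A -/(b i); case: (b i); rewrite ?mul1r ?hc0 // mul0r measure0.
Qed.

Lemma nneseries_ge_term {R : realType} (u : nat -> \bar R) j :
  (forall n, (0 <= u n)%E) -> (u j <= \sum_(0 <= n <oo) u n)%E.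
Proof.
move=> u0; apply: le_trans (nneseries_lim_ge j.+1 (fun n _ _ => u0 n)).
by rewrite big_nat_recr //= lee_paddl // sume_ge0.
Qed.

Lemma nneseries_le_ub {R : realType} (u : nat -> \bar R) (C : \bar R) :
  (forall n, (0 <= u n)%E) -> (forall N, (\sum_(0 <= n < N) u n <= C)%E) ->
  (\sum_(0 <= n <oo) u n <= C)%E.
Proof.
move=> u0 hN; apply: lime_le; first exact: is_cvg_nneseries.
exact: nearW.
Qed.

Section CoverSums.
Local Open Scope complex_scope.
Context {R : realType} {d : measure_display} {X : measurableType d}
  (mu : {measure set X -> \bar R}).
Local Notation L2norm2 := (L2norm2 mu).
Variables (B : nat -> set X) (P : nat -> bool).
Hypothesis mB : forall n, measurable (B n).

Let weighted g n x : \bar R := (((P n)%:R)%:E * (normc2 (\1_(B n) x * g x))%:E)%E.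

Let weighted_ge0 g n x : (0 <= weighted g n x)%E.
Proof. by rewrite mule_ge0 // lee_fin ?normc2_ge0. Qed.

Let measurable_weighted g n : cmeasurable g -> measurable_fun setT (weighted g n).
Proof.
move=> cg; apply: emeasurable_funM; first exact: measurable_cst.
exact/measurable_normc2/cmeasurable_indic.
Qed.

Let integral_weighted g : cmeasurable g ->
  (\int[mu]_x (\sum_(0 <= n <oo) weighted g n x) =
   \sum_(0 <= n <oo) (((P n)%:R)%:E * L2norm2 (fun x => \1_(B n) x * g x)%R))%E.
Proof.
move=> cg; rewrite integral_nneseries //; last by move=> n; exact: measurable_weighted.
apply: congr_lim; apply: funext => N; apply: eq_bigr => n _.
rewrite ge0_integralZl_EFin //.
- by move=> x _; rewrite lee_fin normc2_ge0.
- exact/measurable_normc2/cmeasurable_indic.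
Qed.

Lemma L2norm2_indic_le_cover F g : measurable F -> cmeasurable g ->
  (forall x, F x -> exists2 n, P n & B n x) ->
  (L2norm2 (fun x => \1_F x * g x)%R <=
   \sum_(0 <= n <oo) (((P n)%:R)%:E * L2norm2 (fun x => \1_(B n) x * g x)%R))%E.
Proof.
move=> mF cg hcover; rewrite -integral_weighted //.
apply: ge0_le_integral => //.
- by move=> x _; rewrite lee_fin normc2_ge0.
- exact/measurable_normc2/cmeasurable_indic.
- apply: ge0_emeasurable_sum => [n x _ _|n _]; [exact: weighted_ge0|exact: measurable_weighted].
move=> x _; rewrite normc2_indic /indic.
case: (boolP (x \in F)) => [/set_mem /hcover [n Pn Bnx]|_]; last first.
  by rewrite mul0r nneseries_ge0 // => n _ _; exact: weighted_ge0.
apply: le_trans (nneseries_ge_term _ n (weighted_ge0 g ^~ x)).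
by rewrite /weighted normc2_indic /indic Pn mem_set //= !mul1r mul1e.
Qed.

Lemma sum_L2norm2_indic_le K g : cmeasurable g ->
  (forall x N, \sum_(n < N) ((P n && (x \in B n))%:R : R) <= K) ->
  (\sum_(0 <= n <oo) (((P n)%:R)%:E * L2norm2 (fun x => \1_(B n) x * g x)%R)
   <= K%:E * L2norm2 g)%E.
Proof.
move=> cg hK; have K0 : 0 <= K by have := hK point 0%N; rewrite big_ord0.
rewrite -integral_weighted // /L2norm2 -ge0_integralZl_EFin //; first last.
- exact: measurable_normc2.
- by move=> x _; rewrite lee_fin normc2_ge0.
apply: ge0_le_integral => //.
- by move=> x _; apply: nneseries_ge0 => n _ _; exact: weighted_ge0.
- by apply: ge0_emeasurable_sum => [n x _ _|n _]; [exact: weighted_ge0|exact: measurable_weighted].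
- exact/emeasurable_funM/measurable_normc2/cg/measurable_cst.
move=> x _; apply: nneseries_le_ub => [n|N]; first exact: weighted_ge0.
have weightedE n : weighted g n x = (((P n && (x \in B n))%:R : R) * normc2 (g x))%:E.
  rewrite /weighted normc2_indic -EFinM /indic.
  by case: (P n); case: (x \in B n); rewrite /= ?mul1r ?mul0r.
rewrite (eq_bigr _ (fun n _ => weightedE n)) sumEFin lee_fin -mulr_suml.
by rewrite ler_wpM2r ?normc2_ge0 // big_mkord.
Qed.

End CoverSums.

Section LocalToGlobal.
Context {R : realType} {d : measure_display} {X : measurableType d}
  {dist : X -> X -> R} {mu : {measure set X -> \bar R}}
  (Hm : is_metric dist) (Hborel : borel_sigma dist).
Context {T : (X -> Cx R) -> (X -> Cx R)} (HT : bounded_operator mu T).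
Context {r0 : R}.
Hypothesis hctrl : forall F G, dclosed dist F -> dclosed dist G ->
  (r0%:E < setdist dist F G)%E ->
  forall f, L2 mu f -> Defs.ae_eq mu (indl F (indr T G) f) (fun _ => 0).
Context {c : nat -> X} {sel : nat -> bool} {K e : R} {F : set X}.
Hypothesis hcover : forall y, exists2 n, sel n & dist (c n) y <= 2.
Hypothesis hK : forall y N,
  \sum_(n < N) ((sel n && (dist (c n) y < 2 + r0 + 1))%:R : R) <= K.
Hypotheses (e0 : 0 <= e) (mF : measurable F).
Hypothesis hsmall : forall n, sel n -> cball dist (c n) 2 `&` F !=set0 ->
  (opnorm mu (indl (cball dist (c n) 2) T) <= e%:E)%E.

(* Cover [F] by the balls [cball (c n) 2] meeting it; on each, [T] only sees
   [f] on the concentric ball of radius [2 + r0 + 1], and these larger balls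
   overlap at most [K] times. *)
Lemma L2norm2_indl_le_local f : L2 mu f ->
  (L2norm2 mu (indl F T f) <= (e ^+ 2 * K)%:E * L2norm2 mu f)%E.
Proof.
move=> Lf; have [cf _] := (L2P mu f).1 Lf.
have [cTf _] := (L2P mu _).1 (boundedop_L2 HT Lf).
pose B n := cball dist (c n) 2.
pose O n := oball dist (c n) (2 + r0 + 1).
pose good n : bool := `[< sel n /\ B n `&` F !=set0 >].
have mB n : measurable (B n) := measurable_cball Hm Hborel _ _.
have mO n : measurable (O n) := measurable_oball Hm Hborel _ _.
have cover x : F x -> exists2 n, good n & B n x.
  move=> Fx; have [n sn hn] := hcover x.
  by exists n => //; apply/asboolP; split => //; exists x.
apply: le_trans (L2norm2_indic_le_cover mu _ good mB _ _ mF cTf cover) _.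
have local n : (((good n)%:R)%:E * L2norm2 mu (indl (B n) T f) <=
    (e ^+ 2)%:E * (((sel n)%:R)%:E * L2norm2 mu (fun x => \1_(O n) x * f x)%R))%E.
  case: (boolP (good n)) => [/asboolP [sn meet]|_]; last first.
    by rewrite mul0e mule_ge0 ?mule_ge0 ?L2norm2_ge0 // lee_fin ?sqr_ge0.
  rewrite sn mul1e muleA -EFinM mulr1.
  have LOf := L2_indic mu (mO n) Lf.
  have hae := indl_cball_localize Hm Hborel HT r0 hctrl (c n) 2 f (ler0n _ 2) Lf.
  rewrite (L2norm2_aeeq mu (cmeasurable_indl HT (mB n) Lf)
    (cmeasurable_indl HT (mB n) LOf) hae).
  exact: L2norm2_indl_le HT _ _ _ (mB n) e0 (hsmall n sn meet) LOf.
have term0 n : (0 <= ((good n)%:R)%:E * L2norm2 mu (indl (B n) T f))%E.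
  by rewrite mule_ge0 ?L2norm2_ge0 // lee_fin.
apply: le_trans (lee_nneseries (fun n _ _ => term0 n) (fun n _ => local n)) _.
rewrite nneseriesZl; last by move=> n _; rewrite mule_ge0 ?L2norm2_ge0 // lee_fin.
rewrite [(e ^+ 2 * K)%:E]EFinM -muleA; apply: lee_wpmul2l; first by rewrite lee_fin sqr_ge0.
apply: (sum_L2norm2_indic_le mu _ _ mO _ _ cf) => x N.
have memO n : (x \in O n) = (dist (c n) x < 2 + r0 + 1).
  by apply/idP/idP => [/set_mem|/mem_set].
by under eq_bigr do rewrite memO; exact: hK.
Qed.

End LocalToGlobal.

Lemma ereal_inf_gt0_lbound {R : realType} {I : Type} (f : I -> \bar R) :
  (0 < ereal_inf [set f i | i in [set: I]])%E ->
  exists2 c : R, 0 < c & forall i, (c%:E <= f i)%E.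
Proof.
have lb i : (ereal_inf [set f i | i in [set: I]] <= f i)%E.
  by apply: ereal_inf_lbound; exists i.
case: (ereal_inf _) lb => [r| |] lb // r0.
- by exists r; rewrite -?lte_fin.
- by exists 1 => // i; apply: le_trans (lb i); rewrite leey.
Qed.

Lemma ereal_sup_lty_ubound {R : realType} {I : Type} (f : I -> \bar R) :
  (ereal_sup [set f i | i in [set: I]] < +oo)%E ->
  exists M : R, forall i, (f i <= M%:E)%E.
Proof.
have ub i : (f i <= ereal_sup [set f i | i in [set: I]])%E.
  by apply: ereal_sup_ubound; exists i.
case: (ereal_sup _) ub => [r| |] ub // _.
- by exists r.
- by exists 0 => i; apply: le_trans (ub i) _; rewrite leNye.
Qed.

Lemma abse_opnorm {R : realType} {d : measure_display} {X : measurableType d}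
  (mu : {measure set X -> \bar R}) (S : (X -> Cx R) -> (X -> Cx R)) :
  `|opnorm mu S|%E = opnorm mu S.
Proof. exact/gee0_abs/opnorm_ge0. Qed.

(* The radius [5] leaves room for the [2]-balls of the net that meet the
   unit balls of the union. *)
Definition small_balls_region {R : realType} {d : measure_display}
  {X : measurableType d} (dist : X -> X -> R) (mu : {measure set X -> \bar R})
  (T : (X -> Cx R) -> (X -> Cx R)) (e : R) : set X :=
  \bigcup_(z in [set z | (opnorm mu (indl (cball dist z 5) T) < e%:E)%E])
    oball dist z 1.

Section SmallBallsRegion.
Context {R : realType} {d : measure_display} {X : measurableType d}
  {dist : X -> X -> R} {mu : {measure set X -> \bar R}}
  {T : (X -> Cx R) -> (X -> Cx R)}.
Hypotheses (Hm : is_metric dist) (Hborel : borel_sigma dist)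
  (HT : bounded_operator mu T).

Let mball x r : measurable (cball dist x r) := measurable_cball Hm Hborel x r.

Lemma dopen_small_balls_region e : dopen dist (small_balls_region dist mu T e).
Proof.
move=> y [z Gz hz]; have [r rpos hr] := dopen_oball Hm z 1 y hz.
by exists r => // w /hr; exists z.
Qed.

Lemma opnorm_indl_cball_meets_small_balls_region y e :
  cball dist y 2 `&` small_balls_region dist mu T e !=set0 ->
  (opnorm mu (indl (cball dist y 2) T) <= e%:E)%E.
Proof.
move=> [w [hw [z Gz hz]]]; apply: le_trans (ltW Gz).
apply: (le_opnorm_indl HT _ _ (mball _ _) (mball _ _)).
apply: cball_sub => //; have := dist_triangle Hm z w y.
by rewrite (distC Hm w) /cball /oball /= in hw hz *; lra.
Qed.

Context (xi : set_system X) {xi_filter : Filter xi}.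
Hypothesis Hlim : forall r : R, 0 < r -> forall eps : R, 0 < eps ->
  xi [set x | (opnorm mu (indl (cball dist x r) T) < eps%:E)%E].

Lemma co_small_balls_region e : 0 < e -> co dist xi (small_balls_region dist mu T e).
Proof.
move=> e0 r rpos; have rpos6 : 0 < r + 6 by rewrite addr_gt0.
apply: filterS (Hlim _ rpos6 _ e0) => x hx.
apply: (@lt_le_trans _ _ (r + 1)%:E); first by rewrite lte_fin ltrDl.
apply: le_ereal_inf_tmp => _ [y nFy <-]; rewrite lee_fin leNgt.
apply/negP => hxy; apply: nFy; exists y; last by rewrite /oball /= dist_xx.
apply: le_lt_trans hx; apply: (le_opnorm_indl HT _ _ (mball _ _) (mball _ _)).
by apply: cball_sub => //; lra.
Qed.

End SmallBallsRegion.

Lemma ereal_inf_opnorm_indl_co_eq0 {R : realType} {d : measure_display}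
  {X : measurableType d} {dist : X -> X -> R} {mu : {measure set X -> \bar R}}
  (Hm : is_metric dist) (Hproper : proper_metric dist) (Hborel : borel_sigma dist)
  (Hbdd : forall r, 0 < r ->
     (ereal_sup [set mu (cball dist x r) | x in [set: X]] < +oo)%E)
  (Hunif : (0 < ereal_inf [set mu (cball dist x (2^-1)) | x in [set: X]])%E)
  {T : (X -> Cx R) -> (X -> Cx R)} (HT : bounded_operator mu T)
  (Hctrl : controlled dist mu T) (xi : set_system X) {xi_filter : Filter xi}
  (Hlim : forall r : R, 0 < r -> forall eps : R, 0 < eps ->
     xi [set x | (opnorm mu (indl (cball dist x r) T) < eps%:E)%E]) :
  ereal_inf [set opnorm mu (indl F T) |
               F in [set F | measurable F /\ co dist xi F]] = 0%E.
Proof.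
have [r0 r0pos hctrl] := Hctrl.
have [c0 c0pos hc0] := ereal_inf_gt0_lbound _ Hunif.
have [M hM] := ereal_sup_lty_ubound _ (Hbdd (2 + r0 + 1 + 2^-1) ltac:(lra)).
have [c [sel [hsep hcover]]] := exists_separated_net Hm Hproper point.
have hK := separated_count_le Hm Hborel c sel hsep _ _ _ c0pos hc0 hM.
have K0 : 0 <= M / c0 by have := hK point 0%N; rewrite big_ord0.
apply/eqP; rewrite eq_le; apply/andP; split; last first.
  by apply: le_ereal_inf_tmp => _ [F _ <-]; exact: opnorm_ge0.
apply/lee_addgt0Pr => delta delta0; rewrite add0e.
set e := delta / (M / c0 + 1).
have e0 : 0 < e by rewrite divr_gt0 // ltr_wpDl.
set F := small_balls_region dist mu T e.
have mF : measurable F := measurable_dopen Hborel _ (dopen_small_balls_region Hm e).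
apply: le_trans (ereal_inf_lbound _) _.
  have hco := co_small_balls_region Hm Hborel HT xi Hlim _ e0.
  by exists F => //; split => //; exact: hco.
apply: opnorm_le_of_L2norm2_le (ltW delta0) _ => f Lf.
apply: le_trans (L2norm2_indl_le_local Hm Hborel HT hctrl hcover hK (ltW e0) mF _ f Lf) _.
  by move=> n _; exact: opnorm_indl_cball_meets_small_balls_region Hm Hborel HT (c n) e.
apply: lee_wpmul2r; first exact: L2norm2_ge0.
rewrite lee_fin /e expr_div_n mulrAC ler_pdivrMr ?exprn_gt0 ?ltr_wpDl //.
by rewrite ler_wpM2l ?sqr_ge0 //; nra.
Qed.

Theorem proposition5p8 (R : realType) (d : measure_display)
  (X : measurableType d) (dist : X -> X -> R)
  (mu : {measure set X -> \bar R})
  (Hmetric : is_metric dist)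
  (Hproper : proper_metric dist)
  (Hnoncompact : ~ dcompact dist [set: X])
  (Hborel : borel_sigma dist)
  (Hradon : radon dist mu)
  (Hsupp : full_support dist mu)
  (Hpos : forall x r, 0 < r -> (0 < mu (cball dist x r))%E)
  (Hbdd : forall r, 0 < r ->
     (ereal_sup [set mu (cball dist x r) | x in [set: X]] < +oo)%E)
  (Hunif : (0 < ereal_inf [set mu (cball dist x (2^-1)) | x in [set: X]])%E)
  (T : (X -> Cx R) -> (X -> Cx R))
  (HT : bounded_operator mu T)
  (Hctrl : controlled dist mu T)
  (xi : set_system X) (Hxi : ProperFilter xi)
  (Hfiner : forall A, frechet dist A -> xi A) :
  ereal_inf [set opnorm mu (indl F T) |
               F in [set F | measurable F /\ co dist xi F]] = 0%E
  <->
  (forall r : R, 0 < r -> forall eps : R, 0 < eps ->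
     xi [set x | (`| opnorm mu (indl (cball dist x r) T) | < eps%:E)%E]).
Proof.
split=> [Hinf r r0 eps eps0 | Hlim].
- have : (ereal_inf [set opnorm mu (indl F T) |
      F in [set F | measurable F /\ co dist xi F]] < eps%:E)%E by rewrite Hinf.
  move=> /ereal_inf_lt [_ [F [mF coF] <-] hF].
  apply: filterS (co_cball_sub r coF r0) => x sub.
  rewrite /= abse_opnorm; apply: le_lt_trans hF.
  exact: le_opnorm_indl HT _ _ (measurable_cball Hmetric Hborel x r) mF sub.
- apply: (ereal_inf_opnorm_indl_co_eq0 Hmetric Hproper Hborel Hbdd Hunif HT Hctrl xi).
  move=> r r0 eps eps0; apply: filterS (Hlim r r0 eps eps0) => x.
  by rewrite /= abse_opnorm.
Qed.
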